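(* Let $k\ge1$ and $1\le r\le 4k^2$. Let $\overline{\mathcal{B}}(2k,2k;r)$ be the subset of $\mathcal{B}(2k,2k;r)$ consisting of all boards whose board partition $(\lambda_1,\lambda_2,\lambda_3,\lambda_4)$ satisfies: (i) $\lambda_1\ge\lambda_i$ for all $i>1$; (ii) $\lambda_2\ge\lambda_4$; (iii) if $\lambda_1=\lambda_2$ then $\lambda_3\ge\lambda_4$. Then: (1) $\overline{\mathcal{B}}(2k,2k;r)$ is a disjoint union of sets each consisting of all boards in $\mathcal{B}(2k,2k;r)$ with some fixed board partition; (2) every board of $\mathcal{B}(2k,2k;r)$ is equivalent under $D_4$ to some board of $\overline{\mathcal{B}}(2k,2k;r)$; (3) if two boards of $\overline{\mathcal{B}}(2k,2k;r)$ are equivalent under $D_4$, they have the same board partition.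
   Context: A $2k\times 2k$ grid has cells $(i,j)$, rows $i=1,\dots,2k$ numbered top to bottom and columns $j=1,\dots,2k$ left to right. $\mathcal{B}(2k,2k;r)$ is the set of boards, i.e. subsets of exactly $r$ (''blocked'') cells. The dihedral group $D_4$ of symmetries of the square (rotations by $0,90,180,270$ degrees about the center, reflections across the horizontal midline, vertical midline, main diagonal and anti-diagonal) acts on cells and hence on boards; two boards are equivalent under $D_4$ if some element maps one to the other. The grid is divided into four $k\times k$ quadrants: $Q_1$ = rows $1..k$, columns $1..k$ (top-left); $Q_2$ = rows $1..k$, columns $k+1..2k$ (top-right); $Q_3$ = rows $k+1..2k$, columns $k+1..2k$ (bottom-right); $Q_4$ = rows $k+1..2k$, columns $1..k$ (bottom-left). The board partition of a board is $(\lambda_1,\lambda_2,\lambda_3,\lambda_4)$, where $\lambda_i$ is the number of blocked cells in $Q_i$. *)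

From mathcomp Require Import all_boot.
Set Implicit Arguments. Unset Strict Implicit. Unset Printing Implicit Defensive.

(* Cells of the 2k x 2k grid, 0-indexed: cell (i,j) here is cell (i+1,j+1) of the paper. *)
Definition cell (k : nat) : finType := ('I_(2 * k) * 'I_(2 * k))%type.

Inductive D4 := Rid | Rot90 | Rot180 | Rot270 | RefH | RefV | RefD | RefA.

Definition cell_act (k : nat) (g : D4) (c : cell k) : cell k :=
  let (i, j) := c in
  match g with
  | Rid => (i, j)
  | Rot90 => (j, rev_ord i)
  | Rot180 => (rev_ord i, rev_ord j)
  | Rot270 => (rev_ord j, i)
  | RefH => (rev_ord i, j)
  | RefV => (i, rev_ord j)
  | RefD => (j, i)
  | RefA => (rev_ord j, rev_ord i)
  end.

(* Boards: sets of blocked cells. *)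
Definition is_board (k r : nat) (B : {set cell k}) : Prop := #|B| = r.

Definition board_act (k : nat) (g : D4) (B : {set cell k}) : {set cell k} :=
  [set cell_act g c | c in B].

Definition D4_equiv (k : nat) (B B' : {set cell k}) : Prop :=
  exists g : D4, board_act g B = B'.

Definition inQ1 k (c : cell k) : bool := (c.1 < k) && (c.2 < k).
Definition inQ2 k (c : cell k) : bool := (c.1 < k) && (k <= c.2).
Definition inQ3 k (c : cell k) : bool := (k <= c.1) && (k <= c.2).
Definition inQ4 k (c : cell k) : bool := (k <= c.1) && (c.2 < k).

Definition board_partition k (B : {set cell k}) : nat * nat * nat * nat :=
  (#|[set c in B | inQ1 c]|, #|[set c in B | inQ2 c]|,
   #|[set c in B | inQ3 c]|, #|[set c in B | inQ4 c]|).

Definition good_partition (p : nat * nat * nat * nat) : Prop :=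
  let: (l1, l2, l3, l4) := p in
  [/\ l2 <= l1, l3 <= l1, l4 <= l1, l4 <= l2 & (l1 = l2 -> l4 <= l3)].

Definition in_Bbar k r (B : {set cell k}) : Prop :=
  is_board r B /\ good_partition (board_partition B).

(* D4 acts on board partitions through the permutation it induces on the four
   quadrants, so the theorem reduces to a statement about the D4-orbit of a
   quadruple (l1, l2, l3, l4): the conditions (i)-(iii) hold for at least one
   point of every orbit, and two points of one orbit satisfying them coincide. *)

From mathcomp Require Import all_boot zify.

Definition D4_inv (g : D4) : D4 :=
  match g with Rot90 => Rot270 | Rot270 => Rot90 | _ => g end.

Lemma cell_actK k g : cancel (@cell_act k g) (cell_act (D4_inv g)).
Proof. by case: g => -[i j] /=; rewrite ?rev_ordK. Qed.

Lemma cell_act_inj k g : injective (@cell_act k g).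
Proof. exact: can_inj (@cell_actK k g). Qed.

Lemma card_board_act k g (B : {set cell k}) : #|board_act g B| = #|B|.
Proof. exact/card_imset/cell_act_inj. Qed.

Lemma card_board_act_pred k g (B : {set cell k}) (P : pred (cell k)) :
  #|[set c in board_act g B | P c]| = #|[set c in B | P (cell_act g c)]|.
Proof.
rewrite -[RHS](card_imset _ (@cell_act_inj k g)); apply: eq_card => c.
apply/idP/idP.
- by rewrite !inE => /andP[/imsetP[d dB ->] Pd]; rewrite imset_f // inE dB.
- by case/imsetP=> d; rewrite inE => /andP[dB Pd] ->; rewrite inE Pd imset_f.
Qed.

Lemma leq_half_rev_ord k (i : 'I_(2 * k)) : (k <= rev_ord i) = ~~ (k <= i).
Proof. by rewrite -ltnNge /=; have := ltn_ord i; lia. Qed.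

(* The quadrants are numbered clockwise from the top left, so the rotations act
   on (l1, l2, l3, l4) as cyclic shifts. *)
Definition partition_act (g : D4) (p : nat * nat * nat * nat) :=
  let: (a, b, c, d) := p in
  match g with
  | Rid => (a, b, c, d) | Rot90 => (d, a, b, c)
  | Rot180 => (c, d, a, b) | Rot270 => (b, c, d, a)
  | RefH => (d, c, b, a) | RefV => (b, a, d, c)
  | RefD => (a, d, c, b) | RefA => (c, b, a, d)
  end.

Lemma board_partition_act k g (B : {set cell k}) :
  board_partition (board_act g B) = partition_act g (board_partition B).
Proof.
rewrite /board_partition !card_board_act_pred.
case: g; congr (_, _, _, _); apply: eq_card => -[i j];
  rewrite !inE /inQ1 /inQ2 /inQ3 /inQ4 /= ?ltnNge ?leq_half_rev_ord;
  by case: (k <= i); case: (k <= j); rewrite ?andbT ?andbF.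
Qed.

Lemma good_partitionE a b c d : good_partition (a, b, c, d) <->
  b <= a /\ c <= a /\ d <= a /\ d <= b /\ (a = b -> d <= c).
Proof. by split=> [[]|[? [? [? [? ?]]]]]. Qed.

(* Rotate a largest quadrant to Q1, then reflect in the main diagonal if
   l2 < l4, then in the vertical midline if l1 = l2 and l3 < l4. *)
Lemma good_partition_exists p : exists g, good_partition (partition_act g p).
Proof.
case: p => [[[a b] c] d].
pose good a b c d := b <= a /\ c <= a /\ d <= a /\ d <= b /\ (a = b -> d <= c).
have : good a b c d \/ good d a b c \/ good c d a b \/ good b c d a \/
       good d c b a \/ good b a d c \/ good a d c b \/ good c b a d.
  by rewrite /good; lia.
case=> [|[|[|[|[|[|[|]]]]]]] /good_partitionE;
  [exists Rid | exists Rot90 | exists Rot180 | exists Rot270 |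
   exists RefH | exists RefV | exists RefD | exists RefA] => //.
Qed.

Lemma good_partition_act_eq g p :
  good_partition p -> good_partition (partition_act g p) -> partition_act g p = p.
Proof.
case: p => [[[a b] c] d].
by case: g => /good_partitionE gp /good_partitionE ggp /=; congr (_, _, _, _); lia.
Qed.

Theorem theorem4p1 (k r : nat) (hk : 1 <= k) (hr1 : 1 <= r) (hr2 : r <= 4 * k ^ 2) :
  (* (1) Bbar is the (automatically disjoint) union of the fibres of the
     board-partition map over some set P of partitions *)
  (exists P : nat * nat * nat * nat -> Prop,
     forall B : {set cell k},
       in_Bbar r B <-> (is_board r B /\ P (board_partition B)))
  /\
  (* (2) every board is D4-equivalent to a board of Bbar *)
  (forall B : {set cell k}, is_board r B ->
     exists B' : {set cell k}, in_Bbar r B' /\ D4_equiv B B')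
  /\
  (* (3) D4-equivalent boards of Bbar have the same board partition *)
  (forall B B' : {set cell k}, in_Bbar r B -> in_Bbar r B' ->
     D4_equiv B B' -> board_partition B = board_partition B').
Proof.
split; first by exists good_partition.
split.
- move=> B cardB; have [g good_gB] := good_partition_exists (board_partition B).
  exists (board_act g B); split; last by exists g.
  by rewrite /in_Bbar /is_board card_board_act board_partition_act.
- move=> B B' [_ goodB] [_ goodB'] [g eB']; subst B'.
  by rewrite board_partition_act in goodB' *; rewrite good_partition_act_eq.
Qed.
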